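(* Let $A$ be a bilaterally pseudocompact dg $R$-algebra. \begin{itemize} \item[a)] The homology $H^*(A)$ is a bilaterally pseudocompact graded $R$-algebra; in particular, $H^0(A)$ is a pseudocompact $R$-algebra. \item[b)] For each pseudocompact dg $A$-module $M$, the homology $H^*(M)$ is a pseudocompact graded module over $H^*(A)$. \end{itemize}
   Context: $k$ is a field and $R$ a finite-dimensional separable $k$-algebra. A dg $R$-algebra is a differential algebra in the category of graded $R$-bimodules. It is bilaterally pseudocompact if it carries a complete separated topology admitting a basis of neighbourhoods of $0$ formed by two-sided dg ideals of finite total codimension. A bilaterally pseudocompact graded $R$-algebra is defined analogously with graded two-sided ideals of finite codimension. A pseudocompact $R$-algebra is an $R$-algebra with a complete separated linear topology having a basis of neighbourhoods of $0$ formed by one-sided ideals of finite codimension. A right dg $A$-module is pseudocompact if it carries a topology for which it is complete and separated (as a graded $A$-module) with a basis of neighbourhoods of $0$ formed by dg submodules of finite total codimension; a pseudocompact graded module over a graded algebra is defined analogously with graded submodules of finite codimension. *)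

From HB Require Import structures.
From mathcomp Require Import all_boot all_order all_algebra all_field.
Set Implicit Arguments. Unset Strict Implicit. Unset Printing Implicit Defensive.
Import GRing.Theory.
Local Open Scope ring_scope.

(* Separable finite-dimensional k-algebras: existence of a separability *)
(* idempotent e = sum_{j,l} c_{jl} e_j (x) e_l in R (x)_k R^op, written  *)
(* in coordinates w.r.t. the basis (e_j) = vbasis {:R}:                  *)
(*   mu(e) = 1  and  r e = e r for all r.                                *)
Definition separable_alg (k : fieldType) (R : falgType k) : Prop :=
  exists c : 'M[k]_(\dim (fullv : {vspace R})),
    \sum_(j < \dim (fullv : {vspace R})) \sum_(l < \dim (fullv : {vspace R}))
        c j l *: ((vbasis (fullv : {vspace R}))`_j * (vbasis (fullv : {vspace R}))`_l) = 1
    /\ forall (r : R) (p q : 'I_(\dim (fullv : {vspace R}))),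
      \sum_(j < \dim (fullv : {vspace R}))
          c j q * coord (vbasis (fullv : {vspace R})) p (r * (vbasis (fullv : {vspace R}))`_j)
      = \sum_(l < \dim (fullv : {vspace R}))
          c p l * coord (vbasis (fullv : {vspace R})) q ((vbasis (fullv : {vspace R}))`_l * r).

Section Space.
Variables (k : fieldType) (V : lmodType k).

Definition subspace (S : V -> Prop) : Prop :=
  S 0 /\ forall (a : k) (u v : V), S u -> S v -> S (a *: u + v).

Definition subset_of (S S' : V -> Prop) : Prop := forall v, S v -> S' v.

Definition fincodim (S S' : V -> Prop) : Prop :=
  exists s : seq V, (forall v, v \in s -> S v) /\
    forall v, S v -> exists c : 'I_(size s) -> k,
      S' (v - \sum_(i < size s) c i *: s`_i).

(* A Z-grading of V (V is the total space = direct sum of the components   *)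
(* V^n = image of pi n), given by the family of projections pi n.          *)
Definition is_grading (pi : int -> V -> V) : Prop :=
  (forall n (a : k) u v, pi n (a *: u + v) = a *: pi n u + pi n v) /\
  (forall m n v, pi m (pi n v) = if m == n then pi n v else 0) /\
  (forall v, exists s : seq int, uniq s /\ (forall n, n \notin s -> pi n v = 0)
                                 /\ v = \sum_(n <- s) pi n v).

Definition graded_sub (pi : int -> V -> V) (S : V -> Prop) : Prop :=
  subspace S /\ forall n v, S v -> S (pi n v).

Definition directed (U : (V -> Prop) -> Prop) : Prop :=
  (exists J, U J) /\
  forall J1 J2, U J1 -> U J2 -> exists J3, U J3 /\ subset_of J3 J1 /\ subset_of J3 J2.

(* The subquotient Z/B (B <= Z) carries the linear topology whose basis of *)
(* neighbourhoods of 0 is {J/B | J in U}. [gr_pc_top] says: this is a      *)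
(* basis (directed), formed by graded subspaces of finite total codimension*)
(* and the topology is separated and complete as a graded space (i.e. in   *)
(* each degree n).  Elements of Z/B are represented by elements of Z.      *)
Definition gr_pc_top (pi : int -> V -> V) (Z B : V -> Prop)
    (U : (V -> Prop) -> Prop) : Prop :=
  directed U /\
  (forall J, U J -> graded_sub pi J /\ subset_of B J /\ subset_of J Z /\ fincodim Z J) /\
  (forall v, Z v -> (forall J, U J -> J v) -> B v) /\
  (forall (n : int) (x : (V -> Prop) -> V),
     (forall J, U J -> Z (x J) /\ pi n (x J) = x J) ->
     (forall J1 J2, U J1 -> U J2 -> subset_of J1 J2 -> J2 (x J1 - x J2)) ->
     exists x0, Z x0 /\ pi n x0 = x0 /\ forall J, U J -> J (x0 - x J)).

Definition pc_top (Z B : V -> Prop) (U : (V -> Prop) -> Prop) : Prop :=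
  directed U /\
  (forall J, U J -> subspace J /\ subset_of B J /\ subset_of J Z /\ fincodim Z J) /\
  (forall v, Z v -> (forall J, U J -> J v) -> B v) /\
  (forall x : (V -> Prop) -> V,
     (forall J, U J -> Z (x J)) ->
     (forall J1 J2, U J1 -> U J2 -> subset_of J1 J2 -> J2 (x J1 - x J2)) ->
     exists x0, Z x0 /\ forall J, U J -> J (x0 - x J)).

End Space.

Section Alg.
Variables (k : fieldType) (T : algType k).

Definition graded_alg (pi : int -> T -> T) : Prop :=
  is_grading pi /\ pi 0 1 = 1 /\
  forall (p q : int) a b, pi p a = a -> pi q b = b -> pi (p + q) (a * b) = a * b.

Definition two_sided_ideal_in (Z J : T -> Prop) : Prop :=
  forall a b, Z a -> J b -> J (a * b) /\ J (b * a).

Definition right_ideal_in (Z J : T -> Prop) : Prop :=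
  forall a b, Z a -> J b -> J (b * a).

(* A dg R-algebra (monoid in dg R-bimodules) = graded k-algebra T with a    *)
(* k-algebra map phi : R -> T^0, and an R-bilinear differential d of       *)
(* degree 1 satisfying the graded Leibniz rule.                            *)
Definition dg_R_alg (R : falgType k) (pi : int -> T -> T) (d : T -> T)
    (phi : R -> T) : Prop :=
  graded_alg pi /\
  (forall (a : k) u v, phi (a *: u + v) = a *: phi u + phi v) /\
  phi 1 = 1 /\ (forall u v, phi (u * v) = phi u * phi v) /\
  (forall u, pi 0 (phi u) = phi u) /\
  (forall (a : k) u v, d (a *: u + v) = a *: d u + d v) /\
  (forall n v, pi (n + 1) (d (pi n v)) = d (pi n v)) /\
  (forall v, d (d v) = 0) /\
  (forall (p : int) a b, pi p a = a ->
      d (a * b) = d a * b + (-1) ^+ `|p|%N * (a * d b)) /\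
  (forall r a, d (phi r * a) = phi r * d a /\ d (a * phi r) = d a * phi r).

Definition bpc_dg_alg (pi : int -> T -> T) (d : T -> T) (U : (T -> Prop) -> Prop) : Prop :=
  gr_pc_top pi (fun _ => True) (fun v => v = 0) U /\
  (forall I, U I -> two_sided_ideal_in (fun _ => True) I /\ (forall v, I v -> I (d v))).

(* The graded algebra Z/B (Z a graded subalgebra, B a graded two-sided ideal *)
(* of Z) with topology of basis {J/B | J in U} is a bilaterally           *)
(* pseudocompact graded algebra.                                           *)
Definition bpc_graded_alg_q (pi : int -> T -> T) (Z B : T -> Prop)
    (U : (T -> Prop) -> Prop) : Prop :=
  graded_alg pi /\ graded_sub pi Z /\ Z 1 /\ (forall a b, Z a -> Z b -> Z (a * b)) /\
  graded_sub pi B /\ subset_of B Z /\ two_sided_ideal_in Z B /\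
  (forall J, U J -> two_sided_ideal_in Z J) /\
  gr_pc_top pi Z B U.

(* The (ungraded) algebra Z/B with topology of basis {J/B | J in U} is a   *)
(* pseudocompact algebra (basis of right ideals of finite codimension).    *)
Definition pc_alg_q (Z B : T -> Prop) (U : (T -> Prop) -> Prop) : Prop :=
  subspace Z /\ Z 1 /\ (forall a b, Z a -> Z b -> Z (a * b)) /\
  subspace B /\ subset_of B Z /\ two_sided_ideal_in Z B /\
  (forall J, U J -> right_ideal_in Z J) /\
  pc_top Z B U.

End Alg.

Section Homology.
Variables (k : fieldType) (V : lmodType k).

Definition cycles (d : V -> V) : V -> Prop := fun a => d a = 0.
Definition bounds (d : V -> V) : V -> Prop := fun a => exists b, a = d b.
(* basis of the induced topology on H = Z/B: the images (I /\ Z + B)/B *)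
Definition hom_top (d : V -> V) (U : (V -> Prop) -> Prop) : (V -> Prop) -> Prop :=
  fun J => exists I, U I /\ J = (fun z => exists i c, I i /\ d i = 0 /\ z = i + d c).

Definition cycles0 (pi : int -> V -> V) (d : V -> V) : V -> Prop :=
  fun a => pi 0 a = a /\ d a = 0.
Definition bounds0 (pi : int -> V -> V) (d : V -> V) : V -> Prop :=
  fun a => pi 0 a = a /\ exists b, a = d b.
Definition hom_top0 (pi : int -> V -> V) (d : V -> V) (U : (V -> Prop) -> Prop)
  : (V -> Prop) -> Prop :=
  fun J => exists I, U I /\
    J = (fun z => pi 0 z = z /\ exists i c, I i /\ d i = 0 /\ z = i + d c).
End Homology.

Section Module.
Variables (k : fieldType) (T : algType k) (M : lmodType k).

Definition dg_module (pi : int -> T -> T) (d : T -> T) (piM : int -> M -> M)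
    (dM : M -> M) (act : M -> T -> M) : Prop :=
  is_grading piM /\
  (forall (a : k) m m' x, act (a *: m + m') x = a *: act m x + act m' x) /\
  (forall (a : k) m x y, act m (a *: x + y) = a *: act m x + act m y) /\
  (forall m, act m 1 = m) /\
  (forall m x y, act (act m x) y = act m (x * y)) /\
  (forall (p q : int) m x, piM p m = m -> pi q x = x -> piM (p + q) (act m x) = act m x) /\
  (forall (a : k) u v, dM (a *: u + v) = a *: dM u + dM v) /\
  (forall n v, piM (n + 1) (dM (piM n v)) = dM (piM n v)) /\
  (forall v, dM (dM v) = 0) /\
  (forall (p : int) m x, piM p m = m ->
      dM (act m x) = act (dM m) x + (-1) ^+ `|p|%N *: act m (d x)).

Definition pc_dg_module (piM : int -> M -> M) (dM : M -> M) (act : M -> T -> M)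
    (N : (M -> Prop) -> Prop) : Prop :=
  gr_pc_top piM (fun _ => True) (fun v => v = 0) N /\
  (forall J, N J -> (forall m x, J m -> J (act m x)) /\ (forall m, J m -> J (dM m))).

(* ZM/BM, with topology of basis {J/BM | J in NH}, is a pseudocompact      *)
(* graded module over the graded algebra ZA/BA (action induced by act).    *)
Definition pc_gr_module_q (piM : int -> M -> M) (act : M -> T -> M)
    (ZA BA : T -> Prop) (ZM BM : M -> Prop) (NH : (M -> Prop) -> Prop) : Prop :=
  graded_sub piM ZM /\ graded_sub piM BM /\ subset_of BM ZM /\
  (forall m x, ZM m -> ZA x -> ZM (act m x)) /\
  (forall m x, BM m -> ZA x -> BM (act m x)) /\
  (forall m x, ZM m -> BA x -> BM (act m x)) /\
  (forall J, NH J -> forall m x, J m -> ZA x -> J (act m x)) /\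
  gr_pc_top piM ZM BM NH.
End Module.

From HB Require Import structures.
From mathcomp Require Import all_boot all_order all_algebra all_field.
From mathcomp Require Import boolp classical_sets.
Set Implicit Arguments. Unset Strict Implicit. Unset Printing Implicit Defensive.
Import GRing.Theory.
Local Open Scope ring_scope.

(* The homology H = Z/B of A (or of M) gets the quotient topology, with basic
   neighbourhoods the images of (I /\ Z) + B for I open.  These have finite
   codimension and are (two-sided, resp. H(A)-stable) ideals by the Leibniz rule,
   so the point is that H is separated and complete.  Both facts reduce to a
   linear compactness statement (Mittag-Leffler): a compatible family of
   nonempty affine subspaces F(I) of the finite-dimensional quotients
   W/(W /\ I) admits a compatible family of points.  It is proved by taking, with
   Zorn's lemma, a minimal such family and showing that its members are single
   cosets; the key input is that a directed family of nonempty affine subspaces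
   of a finite-dimensional space has a common point.  For separation, a cycle v
   lying in every I + B yields the system {c | dc - v \in I}, whose compatible
   points converge to some c with v = dc; for completeness, a Cauchy family of
   classes is lifted to a compatible family of cycles and passed to the limit. *)

Section LinearMaps.
Variables (k : fieldType) (V V' : lmodType k) (f : V -> V').
Hypothesis hf : linear f.
#[local] HB.instance Definition _ := GRing.isLinear.Build k V V' *:%R f hf.

Lemma lin0 : f 0 = 0. Proof. exact: linear0. Qed.
Lemma linD u v : f (u + v) = f u + f v. Proof. exact: linearD. Qed.
Lemma linB u v : f (u - v) = f u - f v. Proof. exact: linearB. Qed.
Lemma linZ a u : f (a *: u) = a *: f u. Proof. exact: linearZ. Qed.
Lemma lin_sum (I : Type) (r : seq I) (P : pred I) (F : I -> V) :
  f (\sum_(i <- r | P i) F i) = \sum_(i <- r | P i) f (F i).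
Proof. exact: linear_sum. Qed.

End LinearMaps.

Section Subspaces.
Variables (k : fieldType) (V : lmodType k).
Implicit Types (S I : V -> Prop) (u v x y z : V).

Definition affine S := forall x y z (a : k), S x -> S y -> S z -> S (x + a *: (y - z)).
Definition coset I p : V -> Prop := fun z => I (z - p).
Definition direction S : V -> Prop := fun v => exists x y, S x /\ S y /\ v = x - y.

Section Subspace.
Variables (S : V -> Prop) (hS : subspace S).

Lemma subspace0 : S 0. Proof. by case: hS. Qed.

Lemma subspaceD u v : S u -> S v -> S (u + v).
Proof. by move=> Su Sv; rewrite -[u]scale1r; case: hS => _ Sl; apply: Sl. Qed.

Lemma subspaceZ a u : S u -> S (a *: u).
Proof. by move=> Su; rewrite -[_ *: u]addr0; case: hS => S0 Sl; apply: Sl. Qed.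

Lemma subspaceN u : S u -> S (- u).
Proof. by rewrite -scaleN1r; apply: subspaceZ. Qed.

Lemma subspaceB u v : S u -> S v -> S (u - v).
Proof. by move=> Su Sv; apply: subspaceD => //; apply: subspaceN. Qed.

Lemma subspace_sum (J : Type) (r : seq J) (P : pred J) (F : J -> V) :
  (forall j, P j -> S (F j)) -> S (\sum_(j <- r | P j) F j).
Proof. by move=> SF; apply: (big_ind S); [apply: subspace0|apply: subspaceD|]. Qed.

Lemma subspace_affine : affine S.
Proof. by move=> x y z a Sx Sy Sz; apply: subspaceD => //; apply/subspaceZ/subspaceB. Qed.

Lemma coset_affine p : affine (coset S p).
Proof.
move=> x y z a Sx Sy Sz; rewrite /coset addrAC.
have -> : y - z = (y - p) - (z - p) by rewrite opprB addrA subrK.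
exact: subspace_affine.
Qed.

End Subspace.

Lemma subspaceI S1 S2 : subspace S1 -> subspace S2 -> subspace (fun v => S1 v /\ S2 v).
Proof.
move=> [S10 S1l] [S20 S2l]; split=> // a u v [? ?] [? ?].
by split; [apply: S1l|apply: S2l].
Qed.

Lemma affineI S1 S2 : affine S1 -> affine S2 -> affine (fun v => S1 v /\ S2 v).
Proof. by move=> h1 h2 x y z a [? ?] [? ?] [? ?]; split; [apply: h1|apply: h2]. Qed.

Lemma direction_subspace S : affine S -> (exists x, S x) -> subspace (direction S).
Proof.
move=> affS [x Sx]; split; first by exists x, x; rewrite subrr.
move=> a _ _ [x1 [y1 [S1 [T1 ->]]]] [x2 [y2 [S2 [T2 ->]]]].
exists (x2 + a *: (x1 - y1)), y2; split; first exact: affS.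
by split=> //; rewrite addrAC addrC.
Qed.

Lemma affine_direction S x v : affine S -> S x -> direction S v -> S (x + v).
Proof. by move=> affS Sx [y [z [Sy [Sz ->]]]]; rewrite -[y - z]scale1r; apply: affS. Qed.

End Subspaces.

Lemma affine_preimage (k : fieldType) (V V' : lmodType k) (f : V -> V') (S : V' -> Prop) :
  linear f -> affine S -> affine (fun x => S (f x)).
Proof.
by move=> hf affS x y z a Sx Sy Sz; rewrite (linD hf) (linZ hf) (linB hf); apply: affS.
Qed.

Lemma directed_image (k : fieldType) (V : lmodType k) (U : (V -> Prop) -> Prop)
    (f : (V -> Prop) -> V -> Prop) :
  directed U -> (forall I1 I2, subset_of I1 I2 -> subset_of (f I1) (f I2)) ->
  directed (fun J => exists I, U I /\ J = f I).
Proof.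
move=> [[I0 UI0] dirU] fmono; split; first by exists (f I0), I0.
move=> _ _ [I1 [U1 ->]] [I2 [U2 ->]]; have [I3 [U3 [I31 I32]]] := dirU I1 I2 U1 U2.
by exists (f I3); split; [exists I3|split; apply: fmono].
Qed.

(** * Directed families of affine subspaces in finite dimension *)

Section RowSpaces.
Variables (k : fieldType) (m : nat).
Implicit Types (P S : 'rV[k]_m -> Prop).

Lemma row_span_sub P n (X : 'M[k]_(n, m)) c :
  subspace P -> (forall i, P (row i X)) -> (c <= X)%MS -> P c.
Proof.
move=> hP PX /submxP [w ->]; rewrite mulmx_sum_row.
by apply: subspace_sum => // i _; apply: subspaceZ.
Qed.

Lemma subspace_row_span P : subspace P ->
  exists n (X : 'M[k]_(n, m)), (forall i, P (row i X)) /\ forall c, P c -> (c <= X)%MS.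
Proof.
move=> hP; pose has_rank r := `[< exists n (X : 'M[k]_(n, m)),
  (forall i, P (row i X)) /\ \rank X = r >].
have has0 : exists r, has_rank r.
  by exists 0%N; apply/asboolP; exists 0%N, 0; split; [case|rewrite mxrank0].
have rank_le r : has_rank r -> (r <= m)%N.
  by move=> /asboolP [n [X [_ <-]]]; apply: rank_leq_col.
case: (ex_maxnP has0 rank_le) => r /asboolP [n [X [PX rkX]]] rmax.
exists n, X; split=> // c Pc; apply/negPn/negP => cX.
have PXc : forall i, P (row i (col_mx X c)).
  by move=> i; rewrite -[i]splitK; case: (split i) => j /=; rewrite ?rowKu ?rowKd ?row_id.
have : (\rank X < \rank (col_mx X c))%N.
  apply: rank_ltmx; rewrite ltmxE -{1}addsmxE addsmxSl col_mx_sub /=.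
  by rewrite (negbTE cX) andbF.
rewrite rkX ltnNge; move/negP; apply; apply: rmax; apply/asboolP.
by exists (n + 1)%N, (col_mx X c).
Qed.

Definition spans_direction S n (X : 'M[k]_(n, m)) :=
  (forall i, direction S (row i X)) /\ forall v, direction S v -> (v <= X)%MS.

Lemma affine_spans_direction S : affine S -> (exists x, S x) ->
  exists n (X : 'M[k]_(n, m)), spans_direction S X.
Proof. by move=> affS neS; apply: subspace_row_span; apply: direction_subspace. Qed.

Section DirectedMeet.
Variable C : ('rV[k]_m -> Prop) -> Prop.
Hypotheses (dirC : directed C) (affC : forall S, C S -> (exists x, S x) /\ affine S).

Lemma directed_affine_shrink S n (X : 'M[k]_(n, m)) : C S -> spans_direction S X ->
  (forall S', C S' -> subset_of S S') \/
  exists S3 n3 (X3 : 'M[k]_(n3, m)),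
    C S3 /\ spans_direction S3 X3 /\ (\rank X3 < \rank X)%N.
Proof.
move=> CS [_ spanX]; have [all_sub|] := pselect (forall S', C S' -> subset_of S S').
  by left.
move=> /existsNP [S' /not_implyP [CS' /existsNP [y /not_implyP [Sy nS'y]]]]; right.
have [S3 [CS3 [S3S S3S']]] := proj2 dirC S S' CS CS'.
have [[p S3p] affS3] := affC CS3.
have [n3 [X3 [rowsX3 spanX3]]] := affine_spans_direction affS3 (ex_intro _ p S3p).
exists S3, n3, X3; split=> //; split=> //; apply: rank_ltmx; rewrite ltmxE.
apply/andP; split.
  apply/row_subP => i; apply: spanX.
  by have [x [z [S3x [S3z ->]]]] := rowsX3 i; exists x, z; split; [apply: S3S|split; [apply: S3S|]].
apply/negP => XX3; apply: nS'y; apply: S3S'.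
have dir3 : direction S3 (y - p).
  apply: (row_span_sub (direction_subspace affS3 (ex_intro _ p S3p)) rowsX3).
  by apply: submx_trans XX3; apply: spanX; exists y, p; split=> //; split=> //; apply: S3S.
by have := affine_direction affS3 S3p dir3; rewrite addrC subrK.
Qed.

Lemma directed_affine_meet : exists c, forall S, C S -> S c.
Proof.
suff meet r S n (X : 'M[k]_(n, m)) :
    C S -> spans_direction S X -> \rank X = r -> exists c, forall S, C S -> S c.
  have [S0 CS0] := proj1 dirC; have [neS0 affS0] := affC CS0.
  have [n [X spanX]] := affine_spans_direction affS0 neS0.
  exact: meet (\rank X) S0 n X CS0 spanX erefl.
elim/ltn_ind: r S n X => r IH S n X CS spanX rkX.
have [all_sub|[S3 [n3 [X3 [CS3 [span3 lt3]]]]]] := directed_affine_shrink CS spanX.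
  by have [[x Sx] _] := affC CS; exists x => S' CS'; apply: all_sub.
by apply: (IH (\rank X3) _ S3 n3 X3 CS3 span3 erefl); rewrite -rkX.
Qed.

End DirectedMeet.
End RowSpaces.

Definition lincomb (k : fieldType) (V : lmodType k) (s : seq V)
    (c : 'rV[k]_(size s)) : V :=
  \sum_(i < size s) c 0 i *: s`_i.

Lemma lincomb_linear (k : fieldType) (V : lmodType k) (s : seq V) :
  linear (@lincomb k V s).
Proof.
move=> a u v; rewrite /lincomb scaler_sumr -big_split /=.
by apply: eq_bigr => i _; rewrite !mxE scalerDl scalerA.
Qed.
Arguments lincomb_linear {k V} s.

Section FiniteCodimension.
Variables (k : fieldType) (V : lmodType k).
Implicit Types (S I J W Z : V -> Prop).

Lemma fincodim_lincomb Z J : fincodim Z J ->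
  exists s : seq V, forall v, Z v -> exists c : 'rV_(size s), J (v - lincomb c).
Proof.
move=> [s' [_ cover]]; exists s' => v /cover [c Jv]; exists (\row_i c i).
by congr J: Jv; congr (_ - _); apply: eq_bigr => i _; rewrite mxE.
Qed.

Lemma fincodim_family Z J n (f : 'I_n -> V) : (forall i, Z (f i)) ->
  (forall v, Z v -> exists c : 'I_n -> k, J (v - \sum_(i < n) c i *: f i)) ->
  fincodim Z J.
Proof.
move=> Zf cover; pose s := [seq f i | i <- enum 'I_n].
have sizes : size s = n by rewrite size_map size_enum_ord.
have nth_s (i : 'I_n) : s`_i = f i.
  by rewrite (nth_map i) ?size_enum_ord // nth_ord_enum.
exists s; split; first by move=> v /mapP [i _ ->].
move=> v /cover [c Jv]; exists (fun i => c (cast_ord sizes i)).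
rewrite (reindex (cast_ord (esym sizes))) /=; last first.
  by exists (cast_ord sizes) => i _; apply/val_inj.
by congr J: Jv; congr (_ - _); apply: eq_bigr => i _; rewrite nth_s cast_ordKV.
Qed.

Lemma fincodim_mono Z J1 J2 : fincodim Z J1 -> subset_of J1 J2 -> fincodim Z J2.
Proof.
move=> [s [Zs cover]] J12; exists s; split=> // v /cover [c Jv].
by exists c; apply: J12.
Qed.

Lemma fincodim_restrict Z I : subspace Z -> subspace I ->
  fincodim (fun _ => True) I -> fincodim Z (fun v => Z v /\ I v).
Proof.
move=> hZ hI /fincodim_lincomb [s cover].
pose P (c : 'rV[k]_(size s)) := exists z, Z z /\ I (z - lincomb c).
have hP : subspace P.
  split; first by exists 0; rewrite (lin0 (lincomb_linear s)) subr0; split; apply: subspace0.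
  move=> a c1 c2 [z1 [Z1 I1]] [z2 [Z2 I2]]; exists (a *: z1 + z2).
  split; first by case: hZ => _; apply.
  by rewrite lincomb_linear opprD addrACA -scalerBr; case: hI => _; apply.
have [n [X [PX spanX]]] := subspace_row_span hP.
have [z Pz] := choice PX.
apply: (@fincodim_family _ _ n z) => [i|v Zv]; first by case: (Pz i).
have [c Iv] := cover v Logic.I.
have /submxP [w cw] : (c <= X)%MS by apply: spanX; exists v.
exists (w 0); split.
  apply: (subspaceB hZ Zv); apply: (subspace_sum hZ) => i _.
  by apply: (subspaceZ hZ); case: (Pz i).
have -> : v - \sum_i w 0 i *: z i =
    (v - lincomb c) - \sum_i w 0 i *: (z i - lincomb (row i X)).
  rewrite cw mulmx_sum_row (lin_sum (lincomb_linear s)) -addrA -opprD -big_split /=.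
  by congr (_ - _); apply: eq_bigr => i _; rewrite (linZ (lincomb_linear s)) scalerBr addrC subrK.
apply: (subspaceB hI Iv); apply: (subspace_sum hI) => i _.
by apply: (subspaceZ hI); case: (Pz i).
Qed.

Lemma fincodim_affine_meet W I (C : (V -> Prop) -> Prop) :
  subspace I -> fincodim W I -> directed C ->
  (forall S, C S -> (exists x, S x) /\ subset_of S W /\ affine S /\
     forall x i, S x -> I i -> S (x + i)) ->
  exists x, forall S, C S -> S x.
Proof.
move=> hI /fincodim_lincomb [s cover] dirC hC.
pose Cc (P : 'rV[k]_(size s) -> Prop) := exists S, C S /\ P = fun c => S (lincomb c).
have dirCc : directed Cc.
  have [[S0 CS0] dir] := dirC; split; first by exists (fun c => S0 (lincomb c)), S0.
  move=> _ _ [S1 [CS1 ->]] [S2 [CS2 ->]]; have [S3 [CS3 [S31 S32]]] := dir S1 S2 CS1 CS2.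
  by exists (fun c => S3 (lincomb c)); split; [exists S3|split=> c; [apply: S31|apply: S32]].
have [|c meet] := directed_affine_meet dirCc.
  move=> _ [S [CS ->]]; have [[p Sp] [SW [affS satS]]] := hC S CS; split.
    have [c Ic] := cover p (SW p Sp); exists c.
    have -> : lincomb c = p + - (p - lincomb c) by rewrite opprB addrC subrK.
    exact: satS Sp (subspaceN hI Ic).
  exact: affine_preimage (lincomb_linear s) affS.
by exists (lincomb c) => S CS; apply: (meet (fun c => S (lincomb c))); exists S.
Qed.

End FiniteCodimension.

(** * A Mittag-Leffler lemma *)

Section Near.
Variables (k : fieldType) (V : lmodType k).
Implicit Types (X Y I J : V -> Prop).

Definition near X I : V -> Prop := fun y => exists z, X z /\ I (z - y).

Lemma near_refl X I y : subspace I -> X y -> near X I y.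
Proof. by move=> hI Xy; exists y; rewrite subrr; split=> //; apply: subspace0. Qed.

Lemma near_mono X Y I J : subset_of X Y -> subset_of I J -> subset_of (near X I) (near Y J).
Proof. by move=> XY IJ y [z [Xz Iz]]; exists z; split; [apply: XY|apply: IJ]. Qed.

Lemma near_add X I y i : subspace I -> near X I y -> I i -> near X I (y + i).
Proof.
move=> hI [z [Xz Iz]] Ii; exists z; split=> //.
by rewrite opprD addrA; apply: subspaceB.
Qed.

Lemma near_affine X I : subspace I -> affine X -> affine (near X I).
Proof.
move=> hI affX x y z a [x' [Xx Ix]] [y' [Xy Iy]] [z' [Xz Iz]].
exists (x' + a *: (y' - z')); split; first exact: affX.
have -> : x' + a *: (y' - z') - (x + a *: (y - z)) =
    (x' - x) + a *: ((y' - y) - (z' - z)).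
  rewrite opprD addrACA -scalerBr; congr (_ + _ *: _).
  by rewrite !opprB addrACA [RHS]addrACA (addrC (- z')).
exact: subspace_affine.
Qed.

End Near.

Section MittagLeffler.
Variables (k : fieldType) (V : lmodType k) (W : V -> Prop) (U : (V -> Prop) -> Prop).
Hypotheses (hW : subspace W) (dirU : directed U) (hU : forall I, U I -> subspace I)
  (finU : forall I, U I -> fincodim W (fun v => W v /\ I v)).
Implicit Types (F G : (V -> Prop) -> V -> Prop) (I J S : V -> Prop).

Definition saturated I S := forall x i, S x -> W i -> I i -> S (x + i).

Definition affine_system F :=
  (forall I, U I ->
     (exists x, F I x) /\ subset_of (F I) W /\ affine (F I) /\ saturated I (F I)) /\
  (forall I1 I2, U I1 -> U I2 -> subset_of I1 I2 -> subset_of (F I1) (F I2)).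

Definition subsystem F G := forall I, U I -> subset_of (F I) (G I).

Definition minimal_system F :=
  affine_system F /\ forall G, affine_system G -> subsystem G F -> subsystem F G.

Lemma nbhd_below I J : U I -> U J -> exists I', U I' /\ subset_of I' I /\ subset_of I' J.
Proof. by move=> UI UJ; apply: (proj2 dirU). Qed.

Lemma saturated_meet I (C : (V -> Prop) -> Prop) : U I -> directed C ->
  (forall S, C S -> (exists x, S x) /\ subset_of S W /\ affine S /\ saturated I S) ->
  exists x, forall S, C S -> S x.
Proof.
move=> UI dirC hC; apply: (fincodim_affine_meet (subspaceI hW (hU UI)) (finU UI) dirC).
by move=> S /hC [neS [SW [affS satS]]]; do 3!split=> //; move=> x i Sx [Wi Ii]; apply: satS.
Qed.

Lemma affine_system_meet (Phi : ((V -> Prop) -> V -> Prop) -> Prop) :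
  (exists F, Phi F) ->
  (forall F1 F2, Phi F1 -> Phi F2 ->
     exists F3, Phi F3 /\ subsystem F3 F1 /\ subsystem F3 F2) ->
  (forall F, Phi F -> affine_system F) ->
  affine_system (fun I x => forall F, Phi F -> F I x).
Proof.
move=> [F0 PhiF0] dirPhi sysPhi; split=> [I UI|I1 I2 U1 U2 I12 x Fx F PhiF]; last first.
  by apply: (proj2 (sysPhi F PhiF)) I1 I2 U1 U2 I12 x (Fx F PhiF).
split; last split; last split.
- have [|_ [F [PhiF ->]]|x Fx] := @saturated_meet I (fun S => exists F, Phi F /\ S = F I) UI.
  + split=> [|_ _ [F1 [Phi1 ->]] [F2 [Phi2 ->]]]; first by exists (F0 I), F0.
    have [F3 [Phi3 [F31 F32]]] := dirPhi F1 F2 Phi1 Phi2.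
    by exists (F3 I); split; [exists F3|split; [apply: F31|apply: F32]].
  + exact: (proj1 (sysPhi F PhiF)).
  + by exists x => F PhiF; apply: Fx; exists F.
- by move=> x /(_ F0 PhiF0); have [_ [FW _]] := proj1 (sysPhi F0 PhiF0) I UI; apply: FW.
- move=> x y z a Fx Fy Fz F PhiF; have [_ [_ [affF _]]] := proj1 (sysPhi F PhiF) I UI.
  exact: affF (Fx F PhiF) (Fy F PhiF) (Fz F PhiF).
- move=> x i Fx Wi Ii F PhiF; have [_ [_ [_ satF]]] := proj1 (sysPhi F PhiF) I UI.
  exact: satF (Fx F PhiF) Wi Ii.
Qed.

Lemma subsystem_refl F : subsystem F F.
Proof. by move=> I _ x. Qed.

Lemma chain_meet_system A (Ch : ((V -> Prop) -> V -> Prop) -> Prop) :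
  affine_system A -> (forall F, Ch F -> affine_system F /\ subsystem F A) ->
  (forall F G, Ch F -> Ch G -> subsystem F G \/ subsystem G F) ->
  affine_system (fun I x => forall F, F = A \/ Ch F -> F I x).
Proof.
move=> sysA ChA totCh; apply: affine_system_meet; first by exists A; left.
  move=> F1 F2 [->|Ch1] [->|Ch2].
  - by exists A; split; [left|split; apply: subsystem_refl].
  - by exists F2; split; [right|split; [apply: (proj2 (ChA F2 Ch2))|apply: subsystem_refl]].
  - by exists F1; split; [right|split; [apply: subsystem_refl|apply: (proj2 (ChA F1 Ch1))]].
  - have [F12|F21] := totCh F1 F2 Ch1 Ch2.
      by exists F1; split; [right|split=> //; apply: subsystem_refl].
    by exists F2; split; [right|split=> //; apply: subsystem_refl].
by move=> F [->|/ChA []].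
Qed.

Lemma minimal_subsystem A : affine_system A ->
  exists F, minimal_system F /\ subsystem F A.
Proof.
move=> sysA; pose T := {F | affine_system F /\ subsystem F A}.
pose R (F G : T) := `[< subsystem (sval G) (sval F) >].
have [[F [sysF FA]] Fmax] : exists t : T, premaximal R t.
  apply: (@ZL_preorder T (exist _ A (conj sysA (@subsystem_refl A))) R).
  - by move=> F; apply/asboolP; apply: subsystem_refl.
  - move=> F G H /asboolP FG /asboolP GH; apply/asboolP => I UI x Hx.
    exact/(FG I UI)/(GH I UI).
  move=> Ch totCh; pose ChF F := exists G : T, Ch G /\ F = sval G.
  have sysM : affine_system (fun I x => forall F, F = A \/ ChF F -> F I x).
    apply: chain_meet_system => //; first by move=> _ [G [_ ->]]; apply: (svalP G).
    move=> _ _ [G1 [Ch1 ->]] [G2 [Ch2 ->]].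
    by case: (totCh G1 G2 Ch1 Ch2) => /asboolP; [right|left].
  exists (exist _ _ (conj sysM (fun I _ x Mx => Mx A (or_introl erefl)))) => G ChG.
  by apply/asboolP => I _ x /(_ (sval G)); apply; right; exists G.
exists F; split=> //; split=> // G sysG GF.
have GA : subsystem G A by move=> I UI x Gx; apply/(FA I UI)/(GF I UI).
exact/asboolP/(Fmax (exist _ G (conj sysG GA)))/asboolP.
Qed.

Section Minimal.
Variable F : (V -> Prop) -> V -> Prop.
Hypothesis minF : minimal_system F.

Let sysF : affine_system F := proj1 minF.
Let monoF := proj2 sysF.
Let FW I : U I -> subset_of (F I) W := fun UI => proj1 (proj2 (proj1 sysF I UI)).
Let affF I : U I -> affine (F I) := fun UI => proj1 (proj2 (proj2 (proj1 sysF I UI))).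
Let satF I : U I -> saturated I (F I) := fun UI => proj2 (proj2 (proj2 (proj1 sysF I UI))).

Lemma shrink_minimal G : affine_system G -> subsystem G F -> subsystem F G.
Proof. exact: (proj2 minF). Qed.

(* The points of F I that lift to every F J form a subsystem; they exist by the
   finite-dimensional intersection property. *)
Lemma minimal_system_lift I J y : U I -> U J -> F I y -> near (F J) I y.
Proof.
move=> UI UJ Fy.
pose E K L z := F K z /\ near (F L) K z.
have sysE K L : U K -> U L ->
    (exists x, E K L x) /\ subset_of (E K L) W /\ affine (E K L) /\ saturated K (E K L).
  move=> UK UL; split; last split; last split.
  - have [K' [UK' [K'K K'L]]] := nbhd_below UK UL.
    have [[z Fz] _] := proj1 sysF K' UK'.
    exists z; split; first exact: monoF Fz.
    by apply: near_refl (hU UK) _; apply: monoF Fz.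
  - by move=> x [/(FW UK)].
  - exact: affineI (affF UK) (near_affine (hU UK) (affF UL)).
  - move=> x i [Fx Nx] Wi Ii.
    by split; [exact: satF UK _ _ Fx Wi Ii|exact: near_add (hU UK) Nx Ii].
pose H K z := forall L, U L -> E K L z.
have sysH : affine_system H.
  split=> [K UK|K1 K2 U1 U2 K12 z Hz L UL]; last first.
    have [Fz Nz] := Hz L UL; split; first exact: monoF Fz.
    exact: near_mono Nz.
  split; last split; last split.
  - have [|_ [L [UL ->]]|x Ex] := @saturated_meet K (fun S => exists L, U L /\ S = E K L) UK.
    + have [[L0 UL0] dir] := dirU; split=> [|_ _ [L1 [U1 ->]] [L2 [U2 ->]]].
        by exists (E K L0), L0.
      have [L3 [U3 [L31 L32]]] := dir L1 L2 U1 U2.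
      exists (E K L3); split; first by exists L3.
      by split=> z [Fz Nz]; split=> //; apply: near_mono Nz => // w; apply: monoF.
    + exact: sysE.
    + by exists x => L UL; apply: Ex; exists L.
  - by move=> z /(_ K UK) [/(FW UK)].
  - move=> x y' z a Hx Hy Hz L UL; have [_ [_ [affE _]]] := sysE K L UK UL.
    exact: affE (Hx L UL) (Hy L UL) (Hz L UL).
  - move=> x i Hx Wi Ii L UL; have [_ [_ [_ satE]]] := sysE K L UK UL.
    exact: satE (Hx L UL) Wi Ii.
have FH := shrink_minimal sysH (fun K UK z Hz => proj1 (Hz K UK)).
by have [] := FH I UI y Fy J UJ.
Qed.

(* Keeping in each F I only the points near a point of F I0 congruent to p
   modulo I0 gives a subsystem, so by minimality nothing is removed. *)
Lemma minimal_system_coset I0 p y : U I0 -> F I0 p -> F I0 y -> I0 (y - p).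
Proof.
move=> U0 Fp; pose X I z := F I z /\ F I0 z /\ coset I0 p z.
pose G I y := F I y /\ near (X I) I y.
have sysG : affine_system G.
  split=> [I UI|I1 I2 U1 U2 I12 y' [Fy Ny]]; last first.
    split; first exact: monoF Fy.
    by apply: near_mono Ny => // z [Fz Xz]; split=> //; apply: monoF Fz.
  split; last split; last split.
  - have [I' [UI' [I'I I'0]]] := nbhd_below UI U0.
    have [z [Fz Iz]] := minimal_system_lift U0 UI' Fp.
    have FIz : F I z by apply: monoF Fz.
    exists z; split=> //; apply: near_refl (hU UI) _; split=> //.
    by split=> //; apply: monoF Fz.
  - by move=> x [/(FW UI)].
  - have affX : affine (X I).
      exact: affineI (affF UI) (affineI (affF U0) (coset_affine (p := p) (hU U0))).
    exact: affineI (affF UI) (near_affine (hU UI) affX).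
  - move=> x i [Fx Nx] Wi Ii.
    by split; [exact: satF UI _ _ Fx Wi Ii|exact: near_add (hU UI) Nx Ii].
move=> Fy; have [_ [z [[_ [_ Iz]] Izy]]] := shrink_minimal sysG (fun I _ y => @proj1 _ _) U0 Fy.
have -> : y - p = (z - p) - (z - y) by rewrite opprB [RHS]addrC addrA subrK.
apply: (subspaceB (hU U0)); [exact: Iz|exact: Izy].
Qed.

End Minimal.

Theorem mittag_leffler A : affine_system A ->
  exists x : (V -> Prop) -> V, (forall I, U I -> A I (x I)) /\
    forall I1 I2, U I1 -> U I2 -> subset_of I1 I2 -> I2 (x I1 - x I2).
Proof.
move=> sysA; have [F [minF FA]] := minimal_subsystem sysA.
have /choice [x Fx] : forall I, exists x, U I -> F I x.
  move=> I; have [UI|] := pselect (U I); last by exists 0.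
  by have [[x Fx] _] := proj1 (proj1 minF) I UI; exists x.
exists x; split=> [I UI|I1 I2 U1 U2 I12]; first exact/(FA I UI)/Fx.
apply: (minimal_system_coset minF U2 (Fx I2 U2)).
exact: (proj2 (proj1 minF)) I1 I2 U1 U2 I12 _ (Fx I1 U1).
Qed.

End MittagLeffler.

Section Grading.
Variables (k : fieldType) (V : lmodType k) (pi : int -> V -> V).
Hypothesis hg : is_grading pi.

Let piL : forall n, linear (pi n) := proj1 hg.

Lemma pi_idem n v : pi n (pi n v) = pi n v.
Proof. by rewrite (proj1 (proj2 hg)) eqxx. Qed.

Lemma pi_decomp v : exists s : seq int, v = \sum_(n <- s) pi n v.
Proof. by have [s [_ [_ ev]]] := proj2 (proj2 hg) v; exists s. Qed.

Lemma subspace_graded (S : V -> Prop) v : subspace S -> (forall n, S (pi n v)) -> S v.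
Proof. by move=> hS Spi; have [s ->] := pi_decomp v; apply: subspace_sum. Qed.

Lemma homogeneous_subspace n : subspace (fun v => pi n v = v).
Proof. by split=> [|a u v pu pv]; rewrite ?(lin0 (piL n)) // (piL n) pu pv. Qed.

Section Differential.
Variable d : V -> V.
Hypotheses (hd : linear d) (hdpi : forall n v, pi (n + 1) (d (pi n v)) = d (pi n v)).

Lemma pi_d n v : pi (n + 1) (d v) = d (pi n v).
Proof.
have [s ->] := pi_decomp v; rewrite (lin_sum hd) !(lin_sum (piL _)) (lin_sum hd).
apply: eq_bigr => m _; rewrite -hdpi !(proj1 (proj2 hg)) (inj_eq (addIr 1)).
by case: eqVneq => _; rewrite ?hdpi ?(lin0 hd).
Qed.

Lemma pi_d_pred n v : pi n (d v) = d (pi (n - 1) v).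
Proof. by rewrite -pi_d subrK. Qed.

Lemma cycle_pi n v : d v = 0 -> d (pi n v) = 0.
Proof. by move=> dv; rewrite -pi_d dv (lin0 (piL _)). Qed.

Lemma cycles_subspace : subspace (cycles d).
Proof. by split=> [|a u v du dv]; rewrite /cycles ?(lin0 hd) // hd du dv scaler0 addr0. Qed.

Lemma bounds_subspace : subspace (bounds d).
Proof.
split; first by exists 0; rewrite (lin0 hd).
by move=> a _ _ [u ->] [v ->]; exists (a *: u + v); rewrite hd.
Qed.

Lemma cycles_graded : graded_sub pi (cycles d).
Proof. by split; [apply: cycles_subspace|move=> n v; apply: cycle_pi]. Qed.

Lemma bounds_graded : graded_sub pi (bounds d).
Proof.
split; first exact: bounds_subspace.
by move=> n _ [c ->]; exists (pi (n - 1) c); apply: pi_d_pred.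
Qed.

End Differential.
End Grading.

(** * Topology on the homology of a pseudocompact complex *)

Definition homology_nbhd (k : fieldType) (V : lmodType k) (d : V -> V) (I : V -> Prop) :
  V -> Prop := fun z => exists i c, I i /\ d i = 0 /\ z = i + d c.

Section PseudocompactComplex.
Variables (k : fieldType) (V : lmodType k) (pi : int -> V -> V) (d : V -> V)
  (U : (V -> Prop) -> Prop).
Hypotheses (hg : is_grading pi) (hd : linear d)
  (hdpi : forall n v, pi (n + 1) (d (pi n v)) = d (pi n v))
  (hdd : forall v, d (d v) = 0)
  (topU : gr_pc_top pi (fun _ => True) (fun v => v = 0) U)
  (dU : forall I, U I -> forall v, I v -> I (d v)).
Implicit Types (I J : V -> Prop).

Let piL : forall n, linear (pi n) := proj1 hg.
Let Jf := homology_nbhd d.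

Lemma nbhd_graded I : U I -> graded_sub pi I.
Proof. by move=> UI; have [_ [/(_ I UI) [] ]] := topU. Qed.

Lemma nbhd_subspace I : U I -> subspace I.
Proof. by move/nbhd_graded => []. Qed.

Lemma nbhd_fincodim I : U I -> fincodim (fun _ => True) I.
Proof. by move=> UI; have [_ [/(_ I UI) [_ [_ []]]]] := topU. Qed.

Lemma nbhd_separated v : (forall I, U I -> I v) -> v = 0.
Proof. by have [_ [_ [sepU _]]] := topU; apply: sepU. Qed.

Lemma nbhd_complete n (x : (V -> Prop) -> V) :
  (forall I, U I -> pi n (x I) = x I) ->
  (forall I1 I2, U I1 -> U I2 -> subset_of I1 I2 -> I2 (x I1 - x I2)) ->
  exists x0, pi n x0 = x0 /\ forall I, U I -> I (x0 - x I).
Proof.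
move=> hx cx; have [_ [_ [_ complU]]] := topU.
have [x0 [_ [px0 hx0]]] := complU n x (fun I UI => conj Logic.I (hx I UI)) cx.
by exists x0.
Qed.

Lemma homology_nbhd_subspace I : U I -> subspace (Jf I).
Proof.
move=> UI; have hI := nbhd_subspace UI; split.
  by exists 0, 0; rewrite (lin0 hd) addr0; split=> //; apply: subspace0.
move=> a _ _ [i1 [c1 [I1 [d1 ->]]]] [i2 [c2 [I2 [d2 ->]]]].
exists (a *: i1 + i2), (a *: c1 + c2); split; first by case: hI => _; apply.
by rewrite !hd d1 d2 scaler0 addr0 scalerDr addrACA.
Qed.

Lemma homology_nbhd_graded I : U I -> graded_sub pi (Jf I).
Proof.
move=> UI; split=> [|n _ [i [c [Ii [di ->]]]]]; first exact: homology_nbhd_subspace.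
exists (pi n i), (pi (n - 1) c); split; first by apply: (proj2 (nbhd_graded UI)).
split; first exact: (cycle_pi hg hd hdpi n di).
by rewrite (linD (piL n)) (pi_d_pred hg hd hdpi).
Qed.

Lemma homology_nbhd_cycles I : subset_of (Jf I) (cycles d).
Proof. by move=> _ [i [c [_ [di ->]]]]; rewrite /cycles (linD hd) di hdd addr0. Qed.

Lemma bounds_homology_nbhd I : U I -> subset_of (bounds d) (Jf I).
Proof.
move=> UI _ [c ->]; exists 0, c; rewrite add0r (lin0 hd).
by split=> //; apply: subspace0 (nbhd_subspace UI).
Qed.

Lemma cycle_homology_nbhd I z : I z -> d z = 0 -> Jf I z.
Proof. by move=> Iz dz; exists z, 0; rewrite (lin0 hd) addr0. Qed.

Lemma homology_nbhd_mono I1 I2 : subset_of I1 I2 -> subset_of (Jf I1) (Jf I2).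
Proof. by move=> I12 _ [i [c [Ii [di ->]]]]; exists i, c; split=> //; apply: I12. Qed.

Let finU (W : V -> Prop) : subspace W ->
  forall I, U I -> fincodim W (fun v => W v /\ I v).
Proof. by move=> hW I UI; apply: fincodim_restrict (nbhd_subspace UI) (nbhd_fincodim UI). Qed.

Let dirU : directed U := proj1 topU.

Lemma homogeneous_cycle_bound n v : pi n v = v -> d v = 0 ->
  (forall I, U I -> Jf I v) -> bounds d v.
Proof.
move=> pv dv Jv; pose W c := pi (n - 1) c = c.
have hW : subspace W := homogeneous_subspace hg (n - 1).
pose A I c := W c /\ I (d c - v).
have sysA : affine_system W U A.
  split=> [I UI|I1 I2 _ _ I12 c [Wc Ic]]; last by split=> //; apply: I12.
  have hI := nbhd_subspace UI; split; last split; last split.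
  - have [i [c [Ii [_ vE]]]] := Jv I UI; exists (pi (n - 1) c); split.
      exact: pi_idem.
    rewrite -(pi_d_pred hg hd hdpi) -pv -(linB (piL n)) vE opprD addrCA subrr addr0.
    by apply: (proj2 (nbhd_graded UI)); apply: subspaceN.
  - by move=> c [].
  - exact: affineI (subspace_affine hW) (affine_preimage hd (coset_affine (p := v) hI)).
  - move=> c i [Wc Ic] Wi Ii; split; first exact: subspaceD.
    by rewrite (linD hd) addrAC; apply: subspaceD => //; apply: dU.
have [c [Ac cc]] := mittag_leffler hW dirU nbhd_subspace (finU hW) sysA.
have [c0 [_ c0c]] := nbhd_complete (fun I UI => proj1 (Ac I UI)) cc.
exists c0; apply/eqP; rewrite eq_sym -subr_eq0; apply/eqP; apply: nbhd_separated => I UI.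
have -> : d c0 - v = (d (c I) - v) + d (c0 - c I) by rewrite (linB hd) [RHS]addrC addrA subrK.
apply: (subspaceD (nbhd_subspace UI)); first exact: (proj2 (Ac I UI)).
by apply: dU => //; apply: c0c.
Qed.

Lemma homology_complete n (x : (V -> Prop) -> V) :
  (forall J, hom_top d U J -> cycles d (x J) /\ pi n (x J) = x J) ->
  (forall J1 J2, hom_top d U J1 -> hom_top d U J2 -> subset_of J1 J2 -> J2 (x J1 - x J2)) ->
  exists x0, cycles d x0 /\ pi n x0 = x0 /\ forall J, hom_top d U J -> J (x0 - x J).
Proof.
move=> hx cx; pose W y := pi n y = y /\ d y = 0.
have hW : subspace W := subspaceI (homogeneous_subspace hg n) (cycles_subspace hd).
have topJ I : U I -> hom_top d U (Jf I) by exists I.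
pose A I y := W y /\ Jf I (y - x (Jf I)).
have sysA : affine_system W U A.
  split=> [I UI|I1 I2 U1 U2 I12 y [Wy Jy]].
    have hJ := homology_nbhd_subspace UI; split; last split; last split.
    - exists (x (Jf I)); split; last by rewrite subrr; apply: subspace0.
      by have [dx px] := hx _ (topJ I UI).
    - by move=> y [].
    - exact: affineI (subspace_affine hW) (coset_affine (p := x (Jf I)) hJ).
    - move=> y i [Wy Jy] Wi Ii; split; first exact: (subspaceD hW Wy Wi).
      rewrite addrAC; apply: (subspaceD hJ); first exact: Jy.
      exact: (cycle_homology_nbhd Ii (proj2 Wi)).
  split=> //.
  have -> : y - x (Jf I2) = (y - x (Jf I1)) + (x (Jf I1) - x (Jf I2)) by rewrite addrA subrK.
  apply: (subspaceD (homology_nbhd_subspace U2)); first exact: (homology_nbhd_mono I12 Jy).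
  by apply: cx; [apply: topJ|apply: topJ|apply: homology_nbhd_mono].
have [y [Ay cy]] := mittag_leffler hW dirU nbhd_subspace (finU hW) sysA.
have [y0 [py0 y0y]] := nbhd_complete (fun I UI => proj1 (proj1 (Ay I UI))) cy.
have dy0 : d y0 = 0.
  apply: nbhd_separated => I UI; have [[_ dy] _] := Ay I UI.
  by rewrite -[y0](subrK (y I)) (linD hd) dy addr0; apply: dU => //; apply: y0y.
exists y0; split=> //; split=> // _ [I [UI ->]].
have -> : y0 - x (Jf I) = (y0 - y I) + (y I - x (Jf I)) by rewrite addrA subrK.
apply: (subspaceD (homology_nbhd_subspace UI)); last exact: (proj2 (Ay I UI)).
apply: cycle_homology_nbhd; first exact: y0y.
by rewrite (linB hd) dy0 (proj2 (proj1 (Ay I UI))) subrr.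
Qed.

Lemma homology_gr_pc_top : gr_pc_top pi (cycles d) (bounds d) (hom_top d U).
Proof.
split; first exact: directed_image dirU homology_nbhd_mono.
split.
  move=> _ [I [UI ->]]; split; first exact: homology_nbhd_graded.
  split; first exact: bounds_homology_nbhd.
  split; first exact: homology_nbhd_cycles.
  apply: fincodim_mono (finU (cycles_subspace hd) UI) _.
  by move=> v [dv Iv]; apply: cycle_homology_nbhd.
split; last exact: homology_complete.
move=> v dv Jv; apply: (subspace_graded hg (bounds_subspace hd)) => n.
apply: homogeneous_cycle_bound; first exact: pi_idem.
  exact: (cycle_pi hg hd hdpi n dv).
move=> I UI; apply: (proj2 (homology_nbhd_graded UI)).
by apply: Jv; exists I.
Qed.

End PseudocompactComplex.

(** * Degree zero *)

Definition degree0 (k : fieldType) (V : lmodType k) (pi : int -> V -> V) (S : V -> Prop) :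
  V -> Prop := fun v => pi 0 v = v /\ S v.

Definition degree0_top (k : fieldType) (V : lmodType k) (pi : int -> V -> V)
    (U : (V -> Prop) -> Prop) : (V -> Prop) -> Prop :=
  fun J => exists I, U I /\ J = degree0 pi I.

Section DegreeZero.
Variables (k : fieldType) (V : lmodType k) (pi : int -> V -> V).
Hypothesis hg : is_grading pi.
Implicit Types (S Z B I J : V -> Prop).

Let piL : forall n, linear (pi n) := proj1 hg.

Lemma degree0_subspace S : subspace S -> subspace (degree0 pi S).
Proof. exact: subspaceI (homogeneous_subspace hg 0). Qed.

Lemma degree0_mono S1 S2 : subset_of S1 S2 -> subset_of (degree0 pi S1) (degree0 pi S2).
Proof. by move=> S12 v [pv Sv]; split=> //; apply: S12. Qed.

Lemma fincodim_degree0 Z J : graded_sub pi Z -> graded_sub pi J ->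
  fincodim Z J -> fincodim (degree0 pi Z) (degree0 pi J).
Proof.
move=> gZ gJ [s [Zs cover]].
apply: (@fincodim_family _ _ _ _ (size s) (fun i => pi 0 s`_i)) => [i|v [pv Zv]].
  by split; [apply: pi_idem|apply: (proj2 gZ); apply: Zs; apply: mem_nth].
have [c Jv] := cover v Zv; exists c.
have <- : pi 0 (v - \sum_(i < size s) c i *: s`_i) = v - \sum_(i < size s) c i *: pi 0 s`_i.
  rewrite (linB (piL 0)) pv (lin_sum (piL 0)); congr (_ - _).
  by apply: eq_bigr => i _; rewrite (linZ (piL 0)).
by split; [apply: pi_idem|apply: (proj2 gJ)].
Qed.

Lemma gr_pc_top_degree0 Z B U : graded_sub pi Z -> graded_sub pi B ->
  gr_pc_top pi Z B U -> pc_top (degree0 pi Z) (degree0 pi B) (degree0_top pi U).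
Proof.
move=> gZ gB [dirU [hU [sepU complU]]].
split; first exact: directed_image dirU degree0_mono.
split.
  move=> _ [I [UI ->]]; have [gI [BI [IZ finI]]] := hU I UI.
  split; first exact: degree0_subspace (proj1 gI).
  split; first exact: degree0_mono.
  by split; [apply: degree0_mono|apply: fincodim_degree0].
split.
  move=> v [pv Zv] Jv; split=> //; apply: sepU Zv _ => I UI.
  by have [_ ] := Jv _ (ex_intro _ I (conj UI erefl)).
move=> x Zx cx.
have [||x0 [Zx0 [px0 hx0]]] := complU 0 (fun I => x (degree0 pi I)).
- by move=> I UI; have [px Zx'] := Zx _ (ex_intro _ I (conj UI erefl)).
- move=> I1 I2 U1 U2 I12.
  have [] := cx (degree0 pi I1) (degree0 pi I2) (ex_intro _ I1 (conj U1 erefl))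
    (ex_intro _ I2 (conj U2 erefl)) (degree0_mono I12).
  by [].
exists x0; split=> // _ [I [UI ->]]; split; last exact: hx0.
by rewrite (linB (piL 0)) px0; have [-> _] := Zx _ (ex_intro _ I (conj UI erefl)).
Qed.

End DegreeZero.

Section DegreeZeroAlgebra.
Variables (k : fieldType) (T : algType k) (pi : int -> T -> T).

Lemma bpc_graded_alg_degree0 Z B U : bpc_graded_alg_q pi Z B U ->
  pc_alg_q (degree0 pi Z) (degree0 pi B) (degree0_top pi U).
Proof.
move=> [[hg [pi1 piM]] [gZ [Z1 [ZM [gB [BZ [idB [idU topU]]]]]]]].
have pi0M a b : pi 0 a = a -> pi 0 b = b -> pi 0 (a * b) = a * b.
  by move=> pa pb; have := piM 0 0 a b pa pb; rewrite addr0.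
split; first exact: (degree0_subspace hg (proj1 gZ)).
split; first by [].
split; first by move=> a b [pa Za] [pb Zb]; split; [apply: pi0M|apply: ZM].
split; first exact: (degree0_subspace hg (proj1 gB)).
split; first exact: degree0_mono.
split.
  move=> a b [pa Za] [pb Bb]; have [Bab Bba] := idB a b Za Bb.
  by split; split=> //; apply: pi0M.
split; last exact: gr_pc_top_degree0.
move=> _ [J [UJ ->]] a b [pa Za] [pb Jb]; split; first exact: pi0M.
exact: (proj2 (idU J UJ a b Za Jb)).
Qed.

End DegreeZeroAlgebra.

(** * Products on homology *)

Lemma scale_signK (k : fieldType) (V : lmodType k) n (v : V) :
  (-1) ^+ n *: ((-1) ^+ n *: v) = v.
Proof. by rewrite scalerA -expr2 sqrr_sign scale1r. Qed.

Definition dg_action (k : fieldType) (T V : lmodType k) (d : T -> T) (pi : int -> V -> V)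
    (dV : V -> V) (act : V -> T -> V) :=
  [/\ is_grading pi, linear dV,
      forall n v, pi (n + 1) (dV (pi n v)) = dV (pi n v),
      (forall x, linear (act^~ x)) /\ (forall m, linear (act m)) &
      forall (p : int) m x, pi p m = m ->
        dV (act m x) = act (dV m) x + (-1) ^+ `|p|%N *: act m (d x)].

Section Leibniz.
Variables (k : fieldType) (T V : lmodType k) (d : T -> T) (pi : int -> V -> V)
  (dV : V -> V) (act : V -> T -> V).
Hypothesis hA : dg_action d pi dV act.

Let hg := let: And5 h _ _ _ _ := hA in h.
Let hdV := let: And5 _ h _ _ _ := hA in h.
Let hdpi := let: And5 _ _ h _ _ := hA in h.
Let actl := let: And5 _ _ _ (conj h _) _ := hA in h.
Let actr := let: And5 _ _ _ (conj _ h) _ := hA in h.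
Let leib := let: And5 _ _ _ _ h := hA in h.

Lemma leibniz_cycle p m x : dV m = 0 -> dV (act (pi p m) x) = (-1) ^+ `|p|%N *: act (pi p m) (d x).
Proof.
move=> dm; rewrite (leib x (pi_idem hg p m)) (cycle_pi hg hdV hdpi p dm).
by rewrite (lin0 (actl x)) add0r.
Qed.

Lemma cycles_act m x : dV m = 0 -> d x = 0 -> dV (act m x) = 0.
Proof.
move=> dm dx; have [s ->] := pi_decomp hg m; rewrite (lin_sum (actl x)).
apply: (subspace_sum (cycles_subspace hdV)) => p _.
by rewrite /cycles (leibniz_cycle p x dm) dx (lin0 (actr _)) scaler0.
Qed.

Lemma bounds_act m x : bounds dV m -> d x = 0 -> bounds dV (act m x).
Proof.
move=> [c ->] dx; have [s ->] := pi_decomp hg c.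
rewrite (lin_sum hdV) (lin_sum (actl x)); apply: (subspace_sum (bounds_subspace hdV)) => p _.
exists (act (pi p c) x).
by rewrite (leib x (pi_idem hg p c)) dx (lin0 (actr _)) scaler0 addr0.
Qed.

Lemma act_bounds m x : dV m = 0 -> bounds d x -> bounds dV (act m x).
Proof.
move=> dm [b ->]; have [s ->] := pi_decomp hg m; rewrite (lin_sum (actl _)).
apply: (subspace_sum (bounds_subspace hdV)) => p _.
exists ((-1) ^+ `|p|%N *: act (pi p m) b).
by rewrite (linZ hdV) (leibniz_cycle p b dm) scale_signK.
Qed.

Lemma homology_nbhd_actr (I : V -> Prop) m x : (forall i, I i -> I (act i x)) -> d x = 0 ->
  homology_nbhd dV I m -> homology_nbhd dV I (act m x).
Proof.
move=> Iact dx [i [c [Ii [di ->]]]].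
have [c' dc'] := bounds_act (ex_intro _ c erefl) dx.
exists (act i x), c'; split; first exact: Iact.
by split; [apply: cycles_act|rewrite (linD (actl x)) dc'].
Qed.

Lemma homology_nbhd_actl (I : T -> Prop) (J : V -> Prop) m x :
  (forall i, I i -> J (act m i)) -> dV m = 0 ->
  homology_nbhd d I x -> homology_nbhd dV J (act m x).
Proof.
move=> Jact dm [i [c [Ii [di ->]]]].
have [c' dc'] := act_bounds dm (ex_intro _ c erefl).
exists (act m i), c'; split; first exact: Jact.
by split; [apply: cycles_act|rewrite (linD (actr m)) dc'].
Qed.

End Leibniz.

Lemma mulr_sign_scale (k : fieldType) (T : algType k) n (y : T) :
  (-1) ^+ n * y = (-1) ^+ n *: y.
Proof. by rewrite -signr_odd mulr_sign -signr_odd scaler_sign. Qed.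

Section DgAlgebra.
Variables (k : fieldType) (T : algType k) (pi : int -> T -> T) (d : T -> T)
  (U : (T -> Prop) -> Prop).
Hypotheses (algT : graded_alg pi) (hd : linear d)
  (hdpi : forall n v, pi (n + 1) (d (pi n v)) = d (pi n v))
  (hdd : forall v, d (d v) = 0)
  (leib : forall (p : int) a b, pi p a = a ->
     d (a * b) = d a * b + (-1) ^+ `|p|%N * (a * d b))
  (bpcU : bpc_dg_alg pi d U).

Let hg : is_grading pi := proj1 algT.

Lemma d_unit : d 1 = 0.
Proof.
have := leib 1 (proj1 (proj2 algT)); rewrite /= expr0 !mul1r mulr1.
by move/(congr1 (fun z => z - d 1)); rewrite subrr addrK.
Qed.

Let actT : dg_action d pi d *%R.
Proof.
split=> //; first by split=> [b c u v|a c u v] /=; rewrite ?mulrDl ?mulrDr -?scalerAl -?scalerAr.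
by move=> p a b pa; rewrite -mulr_sign_scale; apply: leib.
Qed.

Lemma homology_bpc_graded_alg : bpc_graded_alg_q pi (cycles d) (bounds d) (hom_top d U).
Proof.
have [topU idU] := bpcU.
split=> //; split; first exact: (cycles_graded hg hd hdpi).
split; first exact: d_unit.
split; first by move=> a b; apply: (cycles_act actT).
split; first exact: (bounds_graded hg hd hdpi).
split; first by move=> _ [c ->]; apply: hdd.
split; first by move=> a b da Bb; split; [apply: (act_bounds actT)|apply: (bounds_act actT)].
split; last by apply: homology_gr_pc_top => // I /idU [].
move=> _ [I [UI ->]] a b da Jb; have [idI _] := idU I UI.
split; [apply: (homology_nbhd_actl actT _ da Jb)|apply: (homology_nbhd_actr actT _ da Jb)].
all: by move=> i Ii; case: (idI a i Logic.I Ii).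
Qed.

End DgAlgebra.

Lemma homology_pc_gr_module (k : fieldType) (T : algType k) (pi : int -> T -> T)
    (d : T -> T) (M : lmodType k) (piM : int -> M -> M) (dM : M -> M)
    (act : M -> T -> M) (N : (M -> Prop) -> Prop) :
  dg_module pi d piM dM act -> pc_dg_module piM dM act N ->
  pc_gr_module_q piM act (cycles d) (bounds d) (cycles dM) (bounds dM) (hom_top dM N).
Proof.
move=> [hg [actl [actr [_ [_ [_ [hdM [hdpi [hdd leib]]]]]]]]] [topN stabN].
have actM : dg_action d piM dM act.
  by split=> //; split=> [x a u v|m a u v]; [apply: actl|apply: actr].
split; first exact: (cycles_graded hg hdM hdpi).
split; first exact: (bounds_graded hg hdM hdpi).
split; first by move=> _ [c ->]; apply: hdd.
split; first by move=> m x; apply: (cycles_act actM).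
split; first by move=> m x; apply: (bounds_act actM).
split; first by move=> m x; apply: (act_bounds actM).
split; last by apply: homology_gr_pc_top => // J /stabN [].
move=> _ [J [NJ ->]] m x Jm dx.
by apply: (homology_nbhd_actr actM _ dx Jm) => i Ji; apply: (proj1 (stabN J NJ)).
Qed.

Lemma hom_top0E (k : fieldType) (V : lmodType k) (pi : int -> V -> V) (d : V -> V)
    (U : (V -> Prop) -> Prop) :
  hom_top0 pi d U = degree0_top pi (hom_top d U).
Proof.
apply/funext => J; apply/propext; split=> [[I [UI ->]]|[_ [[I [UI ->]] ->]]].
  by exists (homology_nbhd d I); split=> //; exists I.
by exists I.
Qed.

Theorem lemma7p7 (k : fieldType) (R : falgType k) (T : algType k)
    (pi : int -> T -> T) (d : T -> T) (phi : R -> T) (U : (T -> Prop) -> Prop) :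
  separable_alg R ->
  dg_R_alg pi d phi ->
  bpc_dg_alg pi d U ->
  (bpc_graded_alg_q pi (cycles d) (bounds d) (hom_top d U) /\
   pc_alg_q (cycles0 pi d) (bounds0 pi d) (hom_top0 pi d U)) /\
  (forall (M : lmodType k) (piM : int -> M -> M) (dM : M -> M) (act : M -> T -> M)
          (N : (M -> Prop) -> Prop),
     dg_module pi d piM dM act ->
     pc_dg_module piM dM act N ->
     pc_gr_module_q piM act (cycles d) (bounds d) (cycles dM) (bounds dM) (hom_top dM N)).
Proof.
move=> _ [algT [_ [_ [_ [_ [hd [hdpi [hdd [leib _]]]]]]]]] bpcU.
have homA := homology_bpc_graded_alg algT hd hdpi hdd leib bpcU.
split; last by move=> M piM dM act N; apply: homology_pc_gr_module.
by split=> //; rewrite hom_top0E; apply: bpc_graded_alg_degree0.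
Qed.
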